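(* Let $n\geq1$, $\eta\in\Omega$ and $u,v\in\mathbb N^2$. Then: (1) if $u\neq v$ then $\bar u\neq\bar v$; (2) $|\overline{T_\eta}|=\lambda_{2,n}$; (3) if $v_{j,\eta}=(l,0)$ or $v_{j,\eta}=(0,l)$, then $l\leq j$; (4) $\pi_i(w)\leq n$ for all $w\in T_\eta$ and $i\in\{1,2\}$; (5) if $v_{j,\eta}=(0,p)$, then for every $q$ with $1\leq q<p$ there exists $l<j$ with $v_{l,\eta}=(0,q)$; if $v_{j,\eta}=(p,0)$, then for every $q$ with $1\leq q<p$ there exists $l<j$ with $v_{l,\eta}=(q,0)$; (6) if $v_{j,\eta}=(0,l)$ then $\{v_{i,\eta}\}_{i=1}^j=\{(0,t)\}_{t=1}^l\cup\{(s,0)\}_{s=1}^{j-l}$, and if $v_{j,\eta}=(l,0)$ then $\{v_{i,\eta}\}_{i=1}^j=\{(0,t)\}_{t=1}^{j-l}\cup\{(s,0)\}_{s=1}^l$.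
   Context: $\pi_i$ denotes the $i$-th coordinate. $\Lambda_{2,n}=\{\alpha\in\mathbb N^2:1\leq\alpha_1+\alpha_2\leq n\}$, $\lambda_{2,n}=|\Lambda_{2,n}|=\binom{n+2}{2}-1$; $\bar v=\big(\binom{v_1}{\alpha_1}\binom{v_2}{\alpha_2}\big)_{\alpha\in\Lambda_{2,n}}$. $\Omega$ is the set of $\eta=(z,d_0,\ldots,d_r)$ with $z\in\{0,1\}$, $d_0=0$, $d_i\geq1$ ($1\leq i\leq r$), $\sum_{i=0}^rd_i=n$. For $j\in\{1,\ldots,n\}$, $t\in\{1,\ldots,r\}$ is unique with $\sum_{i=0}^{t-1}d_i<j\leq\sum_{i=0}^td_i$ and $c=j-\sum_{i=0}^{t-1}d_i$; $v_{j,\eta}=(\sum_{i\text{ odd},i<t}d_i+c,0)$ if $z=1,t$ odd; $(0,\sum_{i\text{ even},i<t}d_i+c)$ if $z=1,t$ even; $(0,\sum_{i\text{ odd},i<t}d_i+c)$ if $z=0,t$ odd; $(\sum_{i\text{ even},i<t}d_i+c,0)$ if $z=0,t$ even. $T_{j,\eta}=\{v_{j,\eta}+p(1,1):0\leq p\leq n-j\}$ ($1\leq j\leq n$), $T_{0,\eta}=\{(p,p):1\leq p\leq n\}$, $T_\eta=\bigcup_{j=0}^nT_{j,\eta}$, $\overline{T_\eta}=\{\bar w:w\in T_\eta\}$. *)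

From mathcomp Require Import all_boot.
Set Implicit Arguments. Unset Strict Implicit. Unset Printing Implicit Defensive.

Definition Lambda2 (n : nat) : seq (nat * nat) :=
  [seq a <- [seq (a1, a2) | a1 <- iota 0 n.+1, a2 <- iota 0 n.+1]
     | (1 <= a.1 + a.2 <= n)].

Definition lambda2 (n : nat) : nat := 'C(n.+2, 2) - 1.

(* \bar v = ( C(v1,a1) C(v2,a2) )_{a in Lambda_{2,n}}, as the vector of its
   coordinates listed along the fixed enumeration of Lambda_{2,n}. *)
Definition vbar (n : nat) (v : nat * nat) : seq nat :=
  [seq 'C(v.1, a.1) * 'C(v.2, a.2) | a <- Lambda2 n].

(* eta = (z, d_0, ..., d_r) is encoded by z : bool (z = 1 <-> true) and
   d = [:: d_0; d_1; ...; d_r] (so d_i = nth 0 d i, r = size d - 1). *)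
Definition Omega (n : nat) (z : bool) (d : seq nat) : bool :=
  [&& 0 < size d, nth 0 d 0 == 0, all (fun x => 0 < x) (behead d)
    & sumn d == n].

Definition psum (d : seq nat) (k : nat) : nat := \sum_(0 <= i < k) nth 0 d i.

(* the index t with psum d t < j <= psum d t.+1, i.e.
   sum_{i<t} d_i < j <= sum_{i<=t} d_i (the least such t) *)
Definition tidx (d : seq nat) (j : nat) : nat :=
  find (fun t => j <= psum d t.+1) (iota 0 (size d)).

Definition vje (z : bool) (d : seq nat) (j : nat) : nat * nat :=
  let t := tidx d j in
  let c := j - psum d t in
  let O := \sum_(0 <= i < t | odd i) nth 0 d i in
  let E := \sum_(0 <= i < t | ~~ odd i) nth 0 d i in
  if z then (if odd t then (O + c, 0) else (0, E + c))
  else (if odd t then (0, O + c) else (E + c, 0)).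

Definition T0 (n : nat) : seq (nat * nat) := [seq (p, p) | p <- iota 1 n].

Definition Tj (n : nat) (z : bool) (d : seq nat) (j : nat) : seq (nat * nat) :=
  [seq ((vje z d j).1 + p, (vje z d j).2 + p) | p <- iota 0 (n - j).+1].

(* T_eta = union_{j=0}^n T_{j,eta} (as a list; membership is what matters) *)
Definition Teta (n : nat) (z : bool) (d : seq nat) : seq (nat * nat) :=
  T0 n ++ flatten [seq Tj n z d j | j <- iota 1 n].

Definition Tbar (n : nat) (z : bool) (d : seq nat) : seq (seq nat) :=
  undup [seq vbar n w | w <- Teta n z d].

From mathcomp Require Import all_boot zify.

Set Implicit Arguments. Unset Strict Implicit. Unset Printing Implicit Defensive.

(* Call an index i an x-step when z = odd t for the block t containing i.  Then
   v_{j,eta} = (number of x-steps in 1..j, 0) if j is an x-step, and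
   (0, number of other steps in 1..j) otherwise: the points v_1, v_2, ... walk
   outwards along the two axes, each step advancing one of two counters.
   Items (3), (5), (6) and the injectivity of j |-> v_{j,eta} are facts about
   such counters.  Every point of T_eta is the diagonal translate of the
   origin or of some v_{j,eta}, and an axis point is recovered from any of its
   diagonal translates, so |T_eta| = n + sum_j (n - j + 1) = lambda_{2,n}.
   Finally v |-> bar v is injective because bar v has the entries v_1 and v_2
   at alpha = (1,0) and (0,1). *)

Lemma mem_iota1 m j : (j \in iota 1 m) = (0 < j <= m).
Proof. by rewrite mem_iota add1n ltnS. Qed.

Definition count_upto (g : pred nat) (j : nat) : nat := count g (iota 1 j).

Section CountUpto.

Variable g : pred nat.

Lemma count_uptoD a b : count_upto g (a + b) = count_upto g a + count g (iota a.+1 b).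
Proof. by rewrite /count_upto iotaD count_cat add1n. Qed.

Lemma count_uptoS j : count_upto g j.+1 = count_upto g j + g j.+1.
Proof. by rewrite -{1}addn1 count_uptoD /= addn0. Qed.

Lemma count_upto_predC j : count_upto g j + count_upto (predC g) j = j.
Proof. by rewrite /count_upto count_predC size_iota. Qed.

Lemma count_upto_le j : count_upto g j <= j.
Proof. by rewrite -[leqRHS]count_upto_predC leq_addr. Qed.

Lemma count_upto_mono : {homo count_upto g : i j / i <= j}.
Proof. by move=> i j /subnKC <-; rewrite count_uptoD leq_addr. Qed.

Lemma count_upto_lt i j : i < j -> g j -> count_upto g i < count_upto g j.
Proof.
by case: j => // j ij gj; rewrite count_uptoS gj addn1 ltnS count_upto_mono.
Qed.

Lemma count_upto_gt0 j : 0 < j -> g j -> 0 < count_upto g j.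
Proof. exact: count_upto_lt. Qed.

Lemma count_upto_inj i j : g i -> g j -> count_upto g i = count_upto g j -> i = j.
Proof.
move=> gi gj cij; case: (ltngtP i j) => // [ij | ji].
  by have := count_upto_lt ij gj; rewrite cij ltnn.
by have := count_upto_lt ji gi; rewrite cij ltnn.
Qed.

Lemma count_upto_onto j q : 0 < q <= count_upto g j ->
  exists2 l, 0 < l <= j & g l && (count_upto g l == q).
Proof.
elim: j => [|j IHj] q_j; first by move: q_j; rewrite /count_upto /=; lia.
have [q_le | q_gt] := leqP q (count_upto g j).
  by have [|l l_j gl] := IHj; [lia | exists l => //; lia].
move: q_j; rewrite count_uptoS; case gj: (g j.+1) => /= q_j; last by lia.
by exists j.+1; [lia | rewrite gj count_uptoS gj; lia].
Qed.

End CountUpto.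

Definition walk (g : pred nat) (j : nat) : nat * nat :=
  if g j then (count_upto g j, 0) else (0, count_upto (predC g) j).

Section Walk.

Variable g : pred nat.

Lemma walk_le j : (walk g j).1 <= j /\ (walk g j).2 <= j.
Proof. by rewrite /walk; case: (g j) => /=; rewrite count_upto_le. Qed.

Lemma walk_on_axis j : minn (walk g j).1 (walk g j).2 = 0.
Proof. by rewrite /walk; case: (g j) => /=; rewrite ?minn0 ?min0n. Qed.

Lemma walk_x j l : 0 < j -> walk g j = (l, 0) -> count_upto g j = l.
Proof.
rewrite /walk => j_gt0; case gj: (g j) => -[] // _ cj.
by have := count_upto_gt0 (g := predC g) j_gt0; rewrite /= gj cj => /(_ isT).
Qed.

Lemma walk_y j l : 0 < j -> walk g j = (0, l) -> count_upto (predC g) j = l.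
Proof.
rewrite /walk => j_gt0; case gj: (g j) => -[] // cj _.
by have := count_upto_gt0 j_gt0 gj; rewrite cj.
Qed.

Lemma walk_offdiag j : 0 < j -> (walk g j).1 != (walk g j).2.
Proof.
rewrite /walk => j_gt0; case gj: (g j) => /=.
  by rewrite neq_ltn count_upto_gt0.
by rewrite neq_ltn count_upto_gt0 ?orbT //= gj.
Qed.

Lemma walk_inj i j : 0 < i -> 0 < j -> walk g i = walk g j -> i = j.
Proof.
rewrite /walk => i_gt0 j_gt0; case gi: (g i); case gj: (g j).
- by case; apply: count_upto_inj.
- by case=> ci; have := count_upto_gt0 i_gt0 gi; rewrite ci.
- by case=> ci; have := count_upto_gt0 j_gt0 gj; rewrite -ci.
- by case; apply: (count_upto_inj (g := predC g)); rewrite /= ?gi ?gj.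
Qed.

Lemma walk_prefix j :
  [seq walk g i | i <- iota 1 j] =i
  [seq (0, t) | t <- iota 1 (count_upto (predC g) j)] ++
  [seq (s, 0) | s <- iota 1 (count_upto g j)].
Proof.
move=> w; rewrite mem_cat; apply/mapP/orP.
- case=> i; rewrite mem_iota1 => /andP[i_gt0 i_j] ->{w}; rewrite /walk.
  case gi: (g i); [right | left]; apply: map_f; rewrite mem_iota1.
    by rewrite count_upto_gt0 ?count_upto_mono.
  by rewrite count_upto_gt0 ?count_upto_mono //= gi.
- case=> /mapP[t]; rewrite mem_iota1 => t_j ->{w}.
    have [l l_j /andP[gl /eqP <-]] := count_upto_onto t_j.
    by exists l; rewrite ?mem_iota1 // /walk; move: gl => /= /negbTE ->.
  have [l l_j /andP[gl /eqP <-]] := count_upto_onto t_j.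
  by exists l; rewrite ?mem_iota1 // /walk gl.
Qed.

Lemma walk_prefix_y j l : 0 < j -> walk g j = (0, l) ->
  [seq walk g i | i <- iota 1 j] =i
  [seq (0, t) | t <- iota 1 l] ++ [seq (s, 0) | s <- iota 1 (j - l)].
Proof.
move=> j_gt0 /(walk_y j_gt0) cj.
by rewrite -cj -[X in X - _](count_upto_predC g j) addnK; apply: walk_prefix.
Qed.

Lemma walk_prefix_x j l : 0 < j -> walk g j = (l, 0) ->
  [seq walk g i | i <- iota 1 j] =i
  [seq (0, t) | t <- iota 1 (j - l)] ++ [seq (s, 0) | s <- iota 1 l].
Proof.
move=> j_gt0 /(walk_x j_gt0) cj.
by rewrite -cj -[X in X - _](count_upto_predC g j) addKn; apply: walk_prefix.
Qed.

Lemma walk_below_y j p q : 0 < j -> walk g j = (0, p) -> 0 < q < p ->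
  exists2 l, 0 < l < j & walk g l = (0, q).
Proof.
move=> j_gt0 wj /andP[q_gt0 q_p].
have : (0, q) \in [seq walk g i | i <- iota 1 j].
  by rewrite (walk_prefix_y j_gt0 wj) mem_cat map_f // mem_iota1 q_gt0 ltnW.
case/mapP=> l; rewrite mem_iota1 => /andP[l_gt0]; rewrite leq_eqVlt.
case/orP=> [/eqP -> | l_j] /esym wl; last by exists l; rewrite ?l_gt0.
by move: q_p; rewrite wl in wj; case: wj => ->; rewrite ltnn.
Qed.

Lemma walk_below_x j p q : 0 < j -> walk g j = (p, 0) -> 0 < q < p ->
  exists2 l, 0 < l < j & walk g l = (q, 0).
Proof.
move=> j_gt0 wj /andP[q_gt0 q_p].
have : (q, 0) \in [seq walk g i | i <- iota 1 j].
  by rewrite (walk_prefix_x j_gt0 wj) mem_cat orbC map_f // mem_iota1 q_gt0 ltnW.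
case/mapP=> l; rewrite mem_iota1 => /andP[l_gt0]; rewrite leq_eqVlt.
case/orP=> [/eqP -> | l_j] /esym wl; last by exists l; rewrite ?l_gt0.
by move: q_p; rewrite wl in wj; case: wj => ->; rewrite ltnn.
Qed.

End Walk.

Section Blocks.

Variable d : seq nat.

Lemma psum0 : psum d 0 = 0.
Proof. by rewrite /psum big_geq. Qed.

Lemma psumS k : psum d k.+1 = psum d k + nth 0 d k.
Proof. by rewrite /psum big_nat_recr. Qed.

Lemma psum_mono : {homo psum d : a b / a <= b}.
Proof. by move=> a b ab; rewrite /psum [leqRHS](big_cat_nat (leq0n a) ab) leq_addr. Qed.

Lemma psum_size : psum d (size d) = sumn d.
Proof. by rewrite /psum sumnE [RHS](big_nth 0). Qed.

Lemma tidx_bounds j : 0 < j <= sumn d ->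
  tidx d j < size d /\ psum d (tidx d j) < j <= psum d (tidx d j).+1.
Proof.
case/andP=> j_gt0 j_sum.
have d_gt0 : 0 < size d by case: d j_sum => //=; lia.
have hit : has (fun t => j <= psum d t.+1) (iota 0 (size d)).
  apply/hasP; exists (size d).-1; first by rewrite mem_iota; lia.
  by rewrite prednK // psum_size.
have t_lt : tidx d j < size d by move: hit; rewrite has_find size_iota.
have := nth_find 0 hit; rewrite -/(tidx d j) nth_iota // add0n => ->.
rewrite andbT; split=> //.
case t_eq: (tidx d j) => [|t]; first by rewrite psum0.
have t_before : t < tidx d j by rewrite t_eq.
have := before_find 0 t_before; rewrite nth_iota ?add0n ?ltnNge => [-> //|]; lia.
Qed.

Lemma tidx_eq t j : t < size d -> psum d t < j <= psum d t.+1 -> tidx d j = t.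
Proof.
move=> t_lt /andP[lo hi].
have j_range : 0 < j <= sumn d by have := psum_mono t_lt; rewrite psum_size; lia.
have [_ /andP[lo' hi']] := tidx_bounds j_range.
case: (ltngtP (tidx d j) t) => // [lt | gt].
  by have := psum_mono lt; lia.
by have := psum_mono gt; lia.
Qed.

Variable P : pred nat.

Lemma count_tidx_block t j : t < size d -> psum d t <= j <= psum d t.+1 ->
  count (P \o tidx d) (iota (psum d t).+1 (j - psum d t)) = P t * (j - psum d t).
Proof.
move=> t_lt /andP[lo hi].
rewrite (@eq_in_count _ _ (fun=> P t)); last first.
  by move=> i; rewrite mem_iota /= => i_j; rewrite (@tidx_eq t) //; lia.
by case: (P t); rewrite ?count_predT ?count_pred0 ?size_iota ?mul1n.
Qed.

Lemma count_upto_tidx_psum t : t <= size d ->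
  count_upto (P \o tidx d) (psum d t) = \sum_(0 <= k < t | P k) nth 0 d k.
Proof.
elim: t => [|t IHt] t_le; first by rewrite psum0 big_geq.
have t_range : psum d t <= psum d t.+1 <= psum d t.+1 by rewrite leqnn psum_mono.
have := count_tidx_block t_le t_range; rewrite psumS addKn => block.
rewrite count_uptoD IHt 1?ltnW // block [RHS]big_mkcond big_nat_recr //= -big_mkcond.
by case: (P t); rewrite ?mul1n ?mul0n.
Qed.

Lemma count_upto_tidx t j : t < size d -> psum d t <= j <= psum d t.+1 ->
  count_upto (P \o tidx d) j = \sum_(0 <= k < t | P k) nth 0 d k + P t * (j - psum d t).
Proof.
move=> t_lt j_t; have /andP[lo _] := j_t.
by rewrite -(subnKC lo) count_uptoD count_upto_tidx_psum 1?ltnW // count_tidx_block // subnKC.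
Qed.

End Blocks.

Definition on_xaxis (z : bool) (d : seq nat) : pred nat := fun i => z == odd (tidx d i).

Lemma vje_walk z d j : 0 < j <= sumn d -> vje z d j = walk (on_xaxis z d) j.
Proof.
move=> j_range; have [t_lt /andP[lo hi]] := tidx_bounds j_range.
have j_t : psum d (tidx d j) <= j <= psum d (tidx d j).+1 by rewrite ltnW.
have cx := count_upto_tidx (fun k => z == odd k) t_lt j_t.
have cy := count_upto_tidx (predC (fun k => z == odd k)) t_lt j_t.
rewrite /walk /on_xaxis /vje cx cy {cx cy}.
case: z => /=; case: (odd (tidx d j)) => /=; rewrite mul1n; congr (_, _); congr (_ + _);
  by apply: eq_bigl => k; case: odd.
Qed.

Lemma vbar_inj n : 0 < n -> injective (vbar n).
Proof.
move=> n_gt0 [u1 u2] [v1 v2] /eq_in_map uv.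
have inL a : 1 <= a.1 + a.2 <= n -> a.1 <= n -> a.2 <= n -> a \in Lambda2 n.
  move=> a_range a1 a2; rewrite mem_filter a_range; apply/allpairsP.
  by exists a; rewrite !mem_iota /= !ltnS a1 a2; case: a {a_range a1 a2}.
have := uv (1, 0); have := uv (0, 1).
by rewrite !inL //= !bin1 !bin0 muln1 mul1n muln1 mul1n => -> // ->.
Qed.

Lemma diag_shift_inj (u v : nat * nat) p q :
  minn u.1 u.2 = 0 -> minn v.1 v.2 = 0 ->
  (u.1 + p, u.2 + p) = (v.1 + q, v.2 + q) -> u = v /\ p = q.
Proof. by case: u v => [u1 u2] [v1 v2] /= u0 v0 [] e1 e2; split; [congr pair|]; lia. Qed.

Lemma triangular_sumn n : sumn [seq (n - j).+1 | j <- iota 1 n] = 'C(n.+1, 2).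
Proof.
elim: n => // n IHn.
rewrite /= (iotaDl 1 1) -map_comp subn1.
rewrite (eq_map (_ : _ =1 fun j => (n - j).+1)) => [|j]; last by rewrite /= add1n subSS.
by rewrite IHn [RHS]binS bin1 addnC.
Qed.

Lemma size_Teta n z d : size (Teta n z d) = lambda2 n.
Proof.
rewrite /Teta /Tj size_cat size_map size_iota size_allpairs_dep.
rewrite (eq_map (_ : _ =1 fun j => (n - j).+1)) => [|j]; last by rewrite size_iota.
by rewrite triangular_sumn /lambda2 [in RHS]binS bin1; lia.
Qed.

Section Eta.

Variables (n : nat) (z : bool) (d : seq nat).
Hypothesis d_sum : sumn d = n.

Lemma vjeE j : 0 < j <= n -> vje z d j = walk (on_xaxis z d) j.
Proof. by rewrite -d_sum; apply: vje_walk. Qed.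

Lemma Teta_le w : w \in Teta n z d -> w.1 <= n /\ w.2 <= n.
Proof.
rewrite mem_cat => /orP[/mapP[p] | /allpairsPdep[j [p [j_n p_n ->]]]].
  by rewrite mem_iota => p_n -> /=; lia.
move: j_n p_n; rewrite !mem_iota => j_n p_n.
have := walk_le (on_xaxis z d) j; rewrite -vjeE /=; lia.
Qed.

Lemma Teta_uniq : uniq (Teta n z d).
Proof.
have vje_axis j : 0 < j <= n -> minn (vje z d j).1 (vje z d j).2 = 0.
  by move/vjeE ->; apply: walk_on_axis.
rewrite cat_uniq; apply/and3P; split.
- by rewrite map_inj_uniq ?iota_uniq // => p q [].
- apply/hasP=> -[w /allpairsPdep[j [p [j_n _ ->]]] /mapP[q _ [e1 e2]]].
  move: j_n; rewrite mem_iota1 => /[dup] j_n /andP[j_gt0 _].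
  by have := walk_offdiag (on_xaxis z d) j_gt0; rewrite -vjeE //; lia.
- apply: allpairs_uniq_dep => [|j _|]; rewrite ?iota_uniq //.
  move=> _ _ /allpairsPdep[i [p [i_n _ ->]]] /allpairsPdep[j [q [j_n _ ->]]] /= e.
  move: i_n j_n; rewrite !mem_iota1 => i_n j_n.
  have [vij <-] := diag_shift_inj (vje_axis i i_n) (vje_axis j j_n) e.
  have [[i_gt0 _] [j_gt0 _]] := (andP i_n, andP j_n).
  by move: vij; rewrite !vjeE // => /(walk_inj i_gt0 j_gt0) ->.
Qed.

Lemma map_vje_iota j : j <= n ->
  [seq vje z d i | i <- iota 1 j] = [seq walk (on_xaxis z d) i | i <- iota 1 j].
Proof.
by move=> j_n; apply/eq_in_map => i; rewrite mem_iota1 => i_j; rewrite vjeE //; lia.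
Qed.

Lemma size_Tbar : 0 < n -> size (Tbar n z d) = lambda2 n.
Proof.
move=> n_gt0; rewrite /Tbar undup_id ?size_map ?size_Teta //.
by rewrite map_inj_uniq ?Teta_uniq //; apply: vbar_inj.
Qed.

End Eta.

Theorem lemma2p5 (n : nat) (z : bool) (d : seq nat) :
  1 <= n -> Omega n z d ->
  (* (1) *)
      (forall u v : nat * nat, u <> v -> vbar n u <> vbar n v) /\
      (* (2) *)
      (size (Tbar n z d) = lambda2 n) /\
      (* (3) *)
      (forall j l, 1 <= j <= n ->
         vje z d j = (l, 0) \/ vje z d j = (0, l) -> l <= j) /\
      (* (4) *)
      (forall w, w \in Teta n z d -> (w.1 <= n) /\ (w.2 <= n)) /\
      (* (5) *)
      (forall j p, 1 <= j <= n ->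
         (vje z d j = (0, p) ->
            forall q, 1 <= q < p -> exists l, 1 <= l < j /\ vje z d l = (0, q)) /\
         (vje z d j = (p, 0) ->
            forall q, 1 <= q < p -> exists l, 1 <= l < j /\ vje z d l = (q, 0))) /\
      (* (6) *)
      (forall j l, 1 <= j <= n ->
         (vje z d j = (0, l) ->
            [seq vje z d i | i <- iota 1 j] =i
            [seq (0, t) | t <- iota 1 l] ++ [seq (s, 0) | s <- iota 1 (j - l)]) /\
         (vje z d j = (l, 0) ->
            [seq vje z d i | i <- iota 1 j] =i
            [seq (0, t) | t <- iota 1 (j - l)] ++ [seq (s, 0) | s <- iota 1 l])).
Proof.
move=> n_gt0 /and4P[_ _ _ /eqP d_sum].
have vje_eq := vjeE z d_sum.
split; first by move=> u v; apply: contra_not; apply: vbar_inj.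
split; first exact: size_Tbar.
split.
  move=> j l /andP[j_gt0 j_n]; rewrite vje_eq ?j_gt0 //.
  by case=> [/(walk_x j_gt0) | /(walk_y j_gt0)] <-; apply: count_upto_le.
split; first exact: Teta_le.
split.
  move=> j p /andP[j_gt0 j_n]; rewrite vje_eq ?j_gt0 //.
  split=> [/(walk_below_y j_gt0) | /(walk_below_x j_gt0)] below q q_p;
    by have [l l_j wl] := below q q_p; exists l; rewrite vje_eq //; lia.
move=> j l /andP[j_gt0 j_n]; rewrite (map_vje_iota z d_sum) // vje_eq ?j_gt0 //.
by split; [apply: walk_prefix_y | apply: walk_prefix_x].
Qed.
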